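(* Let $m,n\in \mathbb{Z}$ and let $c$ be a nonzero integer with $c\mid n^2$, and let $f(X)=X^6+(n^2/c-2m)X^4+(m^2-2n)X^2+c$. Then $\mathrm{Gal}(f/\mathbb{Q})\cong C_6$ if and only if all of the following hold: (i) $-c$ is not a square of an integer; (ii) $g(X):=X^3+(n^2/c-2m)X^2+(m^2-2n)X+c$ (so that $f(X)=g(X^2)$) is irreducible over $\mathbb{Q}$; (iii) $d(m,n,c):= -(4m^3c - m^2n^2 - 18mnc + 4n^3 + 27c^2)$ is a square of an integer.
   Context: $\mathrm{Gal}(f/\mathbb{Q})$ denotes the Galois group of the splitting field of $f$ over $\mathbb{Q}$, and $C_6$ the cyclic group of order $6$. *)

From HB Require Import structures.
From mathcomp Require Import all_boot all_order all_algebra all_fingroup all_solvable all_field.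
Set Implicit Arguments. Unset Strict Implicit. Unset Printing Implicit Defensive.
Import GRing.Theory Num.Theory.
Local Open Scope ring_scope.

(* The coefficient n^2/c (exact integer division, since c | n^2). *)
Definition coefA (m n c : int) : int := ((n ^+ 2) %/ c)%Z - 2 * m.
Definition coefB (m n : int) : int := m ^+ 2 - 2 * n.

Definition fpoly (m n c : int) : {poly rat} :=
  'X^6 + (coefA m n c)%:~R%:P * 'X^4 + (coefB m n)%:~R%:P * 'X^2 + (c%:~R)%:P.

Definition gpoly (m n c : int) : {poly rat} :=
  'X^3 + (coefA m n c)%:~R%:P * 'X^2 + (coefB m n)%:~R%:P * 'X + (c%:~R)%:P.

Definition dmnc (m n c : int) : int :=
  - (4 * m ^+ 3 * c - m ^+ 2 * n ^+ 2 - 18 * m * n * c + 4 * n ^+ 3 + 27 * c ^+ 2).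

From Pilot Require Import Defs.
From HB Require Import structures.
From mathcomp Require Import all_boot all_order all_algebra all_fingroup all_solvable all_field.
From mathcomp Require Import ring zify.

Set Implicit Arguments.
Unset Strict Implicit.
Unset Printing Implicit Defensive.
Import GRing.Theory Num.Theory.
Local Open Scope ring_scope.

Section Cubic.
Variable R : comNzRingType.

Definition cubic (a b c : R) : {poly R} := 'X^3 + a%:P * 'X^2 + b%:P * 'X + c%:P.

Lemma size_cubic a b c : size (cubic a b c) = 4%N.
Proof.
apply/anti_leq/andP; split; last first.
  by rewrite ltnNge; apply/leq_sizeP => /(_ _ (leqnn _)) /eqP; rewrite !coefE /= !(mulr0, addr0) oner_eq0.
by apply/leq_sizeP => -[|[|[|[|j]]]] // _; rewrite !coefE /= !(mulr0, addr0).
Qed.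

Lemma monic_cubic a b c : cubic a b c \is monic.
Proof. by rewrite monicE lead_coefE size_cubic !coefE /= !(mulr0, addr0). Qed.

Lemma horner_cubic a b c x : (cubic a b c).[x] = x ^+ 3 + a * x ^+ 2 + b * x + c.
Proof. by rewrite /cubic !(hornerD, hornerM, hornerC, hornerXn, hornerX). Qed.

Lemma cubic_inj a b c a' b' c' :
  cubic a b c = cubic a' b' c' -> [/\ a = a', b = b' & c = c'].
Proof.
move=> E; have coefE_ i : (cubic a b c)`_i = (cubic a' b' c')`_i by rewrite E.
have := coefE_ 2%N; have := coefE_ 1%N; have := coefE_ 0%N.
by rewrite !coefE /= !(mulr0, mulr1, addr0, add0r).
Qed.

Lemma cubic_prod_XsubC t1 t2 t3 :
  \prod_(t <- [:: t1; t2; t3]) ('X - t%:P) =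
  cubic (- (t1 + t2 + t3)) (t1 * t2 + t2 * t3 + t3 * t1) (- (t1 * t2 * t3)).
Proof. by rewrite !big_cons big_nil /cubic !(polyCN, polyCD, polyCM); ring. Qed.

Lemma comp_cubic_sqr a b c :
  cubic a b c \Po 'X^2 = 'X^6 + a%:P * 'X^4 + b%:P * 'X^2 + c%:P.
Proof. by rewrite /cubic !comp_polyD !comp_polyM !comp_polyC !comp_polyX; ring. Qed.

End Cubic.

Lemma map_cubic (R S : comNzRingType) (f : {rmorphism R -> S}) a b c :
  map_poly f (cubic a b c) = cubic (f a) (f b) (f c).
Proof. by rewrite /cubic !rmorphD !rmorphXn !rmorphM /= !map_polyC !map_polyX. Qed.

Section SplitPoly.
Variables (K : fieldType) (p : {poly K}) (rs : seq K).
Hypothesis p_split : p %= \prod_(r <- rs) ('X - r%:P).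

Lemma dvdp_split_root q : q %| p -> (1 < size q)%N -> exists z, root q z.
Proof.
rewrite (eqp_dvdr _ p_split) => /dvdp_prod_XsubC[msk Hm].
rewrite (eqp_size Hm); case: (mask msk rs) Hm => [|z zs] Hm.
  by rewrite big_nil size_poly1.
by move=> _; exists z; rewrite (eqp_root Hm) big_cons rootM root_XsubC eqxx.
Qed.

Lemma comp_sqr_dvdp_split q : q \is monic -> q \Po 'X^2 %| p ->
  exists zs : seq K, q = \prod_(z <- zs) ('X - (z ^+ 2)%:P).
Proof.
have [k] := ubnP (size q); elim: k q => // k IH q szq mq dq.
have [q_le1 | q_gt1] := leqP (size q) 1.
  exists [::]; rewrite big_nil; apply/eqP; rewrite -eqp_monic ?monic1 //.
  by rewrite -size_poly_eq1 eqn_leq q_le1 size_poly_gt0 monic_neq0.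
have [z qz] : exists z, root (q \Po 'X^2) z.
  apply: dvdp_split_root dq _; have := size_comp_poly q 'X^2.
  by rewrite size_polyXn /= => e; rewrite -ltn_predRL e muln_gt0 andbT ltn_predRL.
have dvq : 'X - (z ^+ 2)%:P %| q.
  by move: qz; rewrite dvdp_XsubCl rootE horner_comp hornerXn.
pose q' := q %/ ('X - (z ^+ 2)%:P).
have Eq : q = q' * ('X - (z ^+ 2)%:P) by rewrite divpK.
have mq' : q' \is monic by rewrite -(monicMr _ (monicXsubC (z ^+ 2))) -Eq.
have szq' : (size q' < k)%N.
  by rewrite size_divp ?polyXsubC_eq0 // size_XsubC; lia.
have dq' : q' \Po 'X^2 %| p.
  by apply: dvdp_trans dq; rewrite Eq comp_polyM dvdp_mulIl.
have [zs Ezs] := IH _ szq' mq' dq'.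
by exists (z :: zs); rewrite big_cons -Ezs mulrC.
Qed.

Lemma monic_dvdp_split q :
  q \is monic -> q %| p -> exists qs : seq K, q = \prod_(r <- qs) ('X - r%:P).
Proof.
move=> mq; rewrite (eqp_dvdr _ p_split) => /dvdp_prod_XsubC[msk Hm].
by exists (mask msk rs); apply/eqP; rewrite -eqp_monic ?monic_prod_XsubC.
Qed.

End SplitPoly.

Lemma rat_sqr_int (q : rat) (z : int) : q ^+ 2 = z%:~R -> exists k : int, q = k%:~R.
Proof.
move=> hq; exists (numq q).
have e : numq q ^+ 2 = z * denq q ^+ 2.
  by apply/eqP; rewrite -(eqr_int rat) rmorphXn rmorphM rmorphXn /= numqE exprMn hq.
have den_dvd : (`|denq q| %| `|numq q| ^ 2)%N.
  by rewrite -abszX e abszM abszX dvdn_mull // dvdn_exp.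
have den_coprime : coprime `|denq q| (`|numq q| ^ 2).
  by rewrite coprimeXr // coprime_sym coprime_num_den.
have den1 : denq q = 1 by rewrite -absz_denq -(gcdn_idPl den_dvd) (eqP den_coprime).
by rewrite numqE den1 mulr1.
Qed.

Section AdjoinDegree.
Variables (F : fieldType) (L : fieldExtType F).
Implicit Types (p : {poly F}) (x : L).

Lemma dim_adjoin1 x : \dim <<1; x>> = adjoin_degree 1 x.
Proof. by rewrite dim_Fadjoin dimv1 muln1. Qed.

Lemma dim_adjoin_root_lt p x :
  p != 0 -> root (map_poly (in_alg L) p) x -> (\dim <<1; x>> < size p)%N.
Proof.
move=> p_neq0 px; have := dvdp_leq _ (minPoly_dvdp (alg_polyOver 1 p) px).
by rewrite map_poly_eq0 p_neq0 size_map_poly size_minPoly dim_adjoin1; apply.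
Qed.

Lemma dim_adjoin_irr_root p x :
  irreducible_poly p -> root (map_poly (in_alg L) p) x -> \dim <<1; x>> = (size p).-1.
Proof.
move=> irr px; have /polyOver1P[q Dq] := minPolyOver 1 x.
have q_dvd : q %| p by rewrite -(dvdp_map (in_alg L)) -Dq minPoly_dvdp ?alg_polyOver.
have sz_q : size q = (\dim <<1; x>>).+1.
  by rewrite -(size_map_poly (in_alg L)) -Dq size_minPoly dim_adjoin1.
have q_ne1 : size q != 1%N by rewrite sz_q eqSS -lt0n adim_gt0.
by rewrite -(eqp_size (irr q q_ne1 q_dvd)) sz_q.
Qed.

Lemma adjoin_degree_le_dim (K : {subfield L}) x : (adjoin_degree K x <= \dim <<1; x>>)%N.
Proof.
have := dvdp_leq (monic_neq0 (monic_minPoly 1 x)) (minPolyS x (sub1v K)).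
by rewrite !size_minPoly dim_adjoin1.
Qed.

End AdjoinDegree.

Lemma dim_adjoin_sqr_le2 (F : fieldType) (L : fieldExtType F) (x : L) (q : F) :
  x ^+ 2 = q%:A -> (\dim <<1; x>> <= 2)%N.
Proof.
move=> xq; have := @dim_adjoin_root_lt F L ('X^2 - q%:P) x.
rewrite size_XnsubC // -size_poly_gt0 size_XnsubC //; apply=> //.
by rewrite rmorphB /= map_polyXn map_polyC rootE !hornerE xq subrr.
Qed.

Lemma sqr_int_mem1 (L : fieldExtType rat) (x : L) (z : int) :
  x ^+ 2 = z%:~R -> x \in 1%VS <-> exists k : int, z = k ^+ 2.
Proof.
move=> xz; split=> [/vlineP[q xq] | [k zk]].
  have : in_alg L (q ^+ 2) = in_alg L z%:~R by rewrite rmorphXn rmorph_int /= -xq.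
  move/fmorph_inj => qz; have [k qk] := rat_sqr_int qz.
  by exists k; apply/(@intr_inj rat); rewrite -qz qk rmorphXn.
have : (x - k%:~R) * (x + k%:~R) == 0 by rewrite -subr_sqr xz zk rmorphXn subrr.
by rewrite mulf_eq0 subr_eq0 addr_eq0 => /orP[] /eqP ->; rewrite ?rpredN rpred_int.
Qed.
Section GaloisCharZero.
Variables (F : numFieldType) (L : splittingFieldType F).

Lemma pchar_num_ext : [pchar L] =i pred0.
Proof. by move=> p; rewrite pchar_lalg pchar_num. Qed.

Lemma galois1_full : galois 1 {:L}.
Proof.
rewrite /galois subvf normalFieldf andbT.
by apply/separableP => x _; apply: (pcharf0_separable _ pchar_num_ext).
Qed.

Lemma card_Gal_full : #|'Gal({:L} / 1)%g| = \dim {:L}.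
Proof. by rewrite -galois_dim ?galois1_full // dimv1 divn1. Qed.

Lemma normalField_Gal_normal (E : {subfield L}) : normalField 1 E ->
  ('Gal({:L} / E) <| 'Gal({:L} / 1))%g /\ #|'Gal({:L} / E)%g| = (\dim {:L} %/ \dim E)%N.
Proof.
move=> nE; have sE : (1 <= E <= fullv)%VS by rewrite sub1v subvf.
by split; [exact: normalField_normal | rewrite -galois_dim // (galoisS sE galois1_full)].
Qed.

Lemma abelian_Gal_normalField (E : {subfield L}) :
  abelian 'Gal({:L} / 1)%g -> normalField 1 E.
Proof.
move=> ab; have sE : (1 <= E <= fullv)%VS by rewrite sub1v subvf.
have nE : ('Gal({:L} / E) <| 'Gal({:L} / 1))%g.
  by rewrite -(sub_abelian_normal _ ab) galS // sub1v.
have := normal_fixedField_galois galois1_full nE.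
by rewrite (galois_fixedField (galoisS sE galois1_full)) => /and3P[].
Qed.

End GaloisCharZero.

Section CyclicOfNormal.
Variables (gT : finGroupType) (G N1 N2 : {group gT}).

Lemma cyclic_coprime_normal_mul :
  (N1 <| G)%g -> (N2 <| G)%g -> cyclic N1 -> cyclic N2 -> coprime #|N1| #|N2| ->
  #|G| = (#|N1| * #|N2|)%N -> cyclic G.
Proof.
move=> nN1 nN2 cyc1 cyc2 co cardG.
have [sN1 nN1G] := andP nN1; have [sN2 nN2G] := andP nN2.
have cent : N2 \subset 'C(N1)%g.
  apply/commG1P/trivgP; rewrite -(coprime_TIg co) setIC commg_subI //.
    by rewrite subsetI subxx (subset_trans sN2).
  by rewrite subsetI subxx (subset_trans sN1).
have -> : G = (N1 * N2)%g :> {set gT}.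
  apply/eqP; rewrite eq_sym eqEcard mulG_subG sN1 sN2 /= TI_cardMg ?coprime_TIg //.
  by rewrite cardG.
exact: cyclicM.
Qed.

End CyclicOfNormal.

Lemma isog_ZpP (gT : finGroupType) (G : {group gT}) k :
  (0 < k)%N -> (G \isog Zp k)%g <-> cyclic G /\ #|G| = k.
Proof.
move=> k_gt0; have cycZ : cyclic (Zp k).
  by rewrite /Zp; case: ifP => _; [rewrite Zp_cycle cycle_cyclic | exact: cyclic1].
split=> [isoG | [cycG cardG]].
  by rewrite (isog_cyclic isoG) cycZ (card_isog isoG) card_Zp.
by rewrite (isog_cyclic_card _ cycG) cycZ card_Zp // cardG eqxx.
Qed.

Lemma cubic_sqr_reciprocal (K : fieldType) (a b m n c x : K) :
  a * c = n ^+ 2 - 2 * m * c -> b = m ^+ 2 - 2 * n -> x != 0 ->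
  x ^+ 6 * (cubic a b c).[- c / x ^+ 2] = - c * (cubic m n c).[x] * (cubic m n c).[- x].
Proof.
move=> ac -> x0; apply/eqP; rewrite -subr_eq0; apply/eqP.
transitivity (c * x ^+ 2 * (a * c - (n ^+ 2 - 2 * m * c))); first by rewrite !horner_cubic; field.
by rewrite ac subrr mulr0.
Qed.

Lemma irredp_root_size (F : fieldType) (p : {poly F}) x :
  irreducible_poly p -> root p x -> size p = 2%N.
Proof.
move=> irr px; have dvd : 'X - x%:P %| p by rewrite dvdp_XsubCl.
by rewrite -(eqp_size (irr _ _ dvd)) ?size_XsubC.
Qed.

Definition hpoly (m n c : int) : {poly rat} := cubic m%:~R n%:~R c%:~R.

Lemma coefA_mulr (m n c : int) : (c %| n ^+ 2)%Z -> Defs.coefA m n c * c = n ^+ 2 - 2 * m * c.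
Proof. by move=> dvd; rewrite /Defs.coefA mulrBl divzK. Qed.

Lemma gpoly_cubic (m n c : int) :
  gpoly m n c = cubic (Defs.coefA m n c)%:~R (Defs.coefB m n)%:~R c%:~R.
Proof. by []. Qed.

Lemma fpoly_comp (m n c : int) : fpoly m n c = gpoly m n c \Po 'X^2.
Proof. by rewrite gpoly_cubic comp_cubic_sqr. Qed.

Section CubicCoefficients.
Variables (R : comUnitRingType) (m n c : int).
Hypothesis c_dvd : (c %| n ^+ 2)%Z.

Lemma coefA_mulr_int :
  (Defs.coefA m n c)%:~R * c%:~R = n%:~R ^+ 2 - 2 * m%:~R * c%:~R :> R.
Proof. by rewrite -rmorphM coefA_mulr // rmorphB !rmorphM /=; ring. Qed.

Lemma coefB_int : (Defs.coefB m n)%:~R = m%:~R ^+ 2 - 2 * n%:~R :> R.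
Proof. by rewrite rmorphB !rmorphM /=; ring. Qed.

End CubicCoefficients.

Lemma hpoly_irr_of_gpoly (m n c : int) : c != 0 -> (c %| n ^+ 2)%Z ->
  irreducible_poly (gpoly m n c) -> irreducible_poly (hpoly m n c).
Proof.
move=> c_neq0 c_dvd girr; apply: cubic_irreducible; first by rewrite size_cubic.
move=> x; apply/negP => hx.
have x_neq0 : x != 0.
  apply: contraNneq c_neq0 => x0; move: hx; rewrite /root horner_cubic x0.
  by rewrite expr0n !mulr0 !add0r intr_eq0.
have := cubic_sqr_reciprocal (@coefA_mulr_int _ m n c c_dvd) (@coefB_int _ m n) x_neq0.
rewrite (rootP hx) mulr0 mul0r => /eqP; rewrite mulf_eq0 expf_eq0 (negPf x_neq0) andbF /=.
by rewrite -gpoly_cubic => /eqP/rootP/(irredp_root_size girr); rewrite size_cubic.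
Qed.

Section SplittingField.
Variables (m n c : int) (L : splittingFieldType rat).
Hypotheses (c_neq0 : c != 0) (c_dvd : (c %| n ^+ 2)%Z).
Hypothesis splitL : splittingFieldFor 1 (map_poly (in_alg L) (fpoly m n c)) {:L}.

Local Notation mL := (m%:~R : L).
Local Notation nL := (n%:~R : L).
Local Notation cL := (c%:~R : L).
Local Notation aL := ((Defs.coefA m n c)%:~R : L).
Local Notation bL := ((Defs.coefB m n)%:~R : L).
Local Notation fL := (map_poly (in_alg L) (fpoly m n c)).
Local Notation gL := (map_poly (in_alg L) (gpoly m n c)).
Local Notation hL := (map_poly (in_alg L) (hpoly m n c)).

Lemma map_int_cubic (z1 z2 z3 : int) :
  map_poly (in_alg L) (cubic z1%:~R z2%:~R z3%:~R) = cubic z1%:~R z2%:~R z3%:~R.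
Proof. by rewrite map_cubic !rmorph_int. Qed.

Lemma gL_cubic : gL = cubic aL bL cL.
Proof. by rewrite gpoly_cubic map_int_cubic. Qed.

Lemma fL_comp : fL = gL \Po 'X^2.
Proof. by rewrite fpoly_comp map_comp_poly map_polyXn. Qed.

Lemma cL_neq0 : cL != 0.
Proof. by rewrite -(rmorph_int (in_alg L)) fmorph_eq0 intr_eq0. Qed.

Lemma exists_sqrt_negc : exists s : L, s ^+ 2 = - cL.
Proof.
have [rs fL_split _] := splitL.
have [zs gE] : exists zs, cubic aL bL cL = \prod_(z <- zs) ('X - (z ^+ 2)%:P).
  by apply: (comp_sqr_dvdp_split fL_split (monic_cubic aL bL cL)); rewrite -gL_cubic fL_comp.
move: (size_cubic aL bL cL); rewrite gE size_prod_XsubC.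
case: zs gE => [|z1 [|z2 [|z3 []]]] // gE _; exists (z1 * z2 * z3).
move/(congr1 (horner^~ 0)): gE; rewrite horner_cubic !big_cons big_nil mulr1.
rewrite !hornerM !hornerXsubC => c_prod.
have -> : cL = (0 - z1 ^+ 2) * ((0 - z2 ^+ 2) * (0 - z3 ^+ 2)) by rewrite -c_prod; ring.
by ring.
Qed.

Lemma exists_t : exists t1 t2 t3 : L,
  [/\ mL = - (t1 * t2 + t2 * t3 + t3 * t1), nL = t1 * t2 * t3 * (t1 + t2 + t3)
    & cL = - (t1 * t2 * t3) ^+ 2].
Proof.
have [s sqr_s] := exists_sqrt_negc.
have c_s : cL = - s ^+ 2 by rewrite sqr_s opprK.
have [t [n_st a_t]] : exists t, nL = - (s * t) /\ aL = - t ^+ 2 - 2 * mL.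
  exists (s * nL / cL); split; first by rewrite !mulrA -expr2 sqr_s; field; exact: cL_neq0.
  apply: (mulIf cL_neq0); rewrite coefA_mulr_int // !exprMn sqr_s.
  by field; exact: cL_neq0.
have fL_factor : fL = cubic t (- mL) (- s) * cubic (- t) (- mL) s.
  rewrite fL_comp gL_cubic comp_cubic_sqr a_t coefB_int n_st c_s /cubic.
  by rewrite !(polyCN, polyCD, polyCB, polyCM, polyC_exp, polyC1); ring.
have [rs fL_split _] := splitL.
have [ts tsE] : exists ts, cubic t (- mL) (- s) = \prod_(r <- ts) ('X - r%:P).
  by apply: (monic_dvdp_split fL_split (monic_cubic _ _ _)); rewrite fL_factor dvdp_mulIl.
move: (size_cubic t (- mL) (- s)); rewrite tsE size_prod_XsubC.
case: ts tsE => [|t1 [|t2 [|t3 []]]] // tsE _.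
move: tsE; rewrite cubic_prod_XsubC => /cubic_inj[t_E m_E s_E].
exists t1, t2, t3; split.
- by rewrite -[mL]opprK m_E.
- by rewrite n_st t_E -(oppr_inj s_E); ring.
- by rewrite -(oppr_inj s_E) sqr_s opprK.
Qed.

Section Roots.
Variables t1 t2 t3 : L.
Hypotheses (m_t : mL = - (t1 * t2 + t2 * t3 + t3 * t1))
  (n_t : nL = t1 * t2 * t3 * (t1 + t2 + t3)) (c_t : cL = - (t1 * t2 * t3) ^+ 2).

Let s := t1 * t2 * t3.
Let r1 := t2 * t3.
Let r2 := t3 * t1.
Let r3 := t1 * t2.
Let dlt := (r1 - r2) * (r1 - r3) * (r2 - r3).
Local Notation K1 := <<1; r1>>%AS.

Lemma sqr_s : s ^+ 2 = - cL.
Proof. by rewrite c_t opprK. Qed.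

Lemma sqr_s_int : s ^+ 2 = (- c)%:~R.
Proof. by rewrite sqr_s rmorphN. Qed.

Lemma s_neq0 : s != 0.
Proof. by apply: contra cL_neq0 => /eqP s0; rewrite c_t -/s s0 expr0n oppr0. Qed.

Lemma aL_t : aL = - (t1 ^+ 2 + t2 ^+ 2 + t3 ^+ 2).
Proof. by apply: (mulIf cL_neq0); rewrite coefA_mulr_int // n_t m_t c_t; ring. Qed.

Lemma gL_horner_t z : gL.[z] = (z - t1 ^+ 2) * (z - t2 ^+ 2) * (z - t3 ^+ 2).
Proof. by rewrite gL_cubic horner_cubic aL_t coefB_int m_t n_t c_t; ring. Qed.

Lemma fL_horner_t z : fL.[z] = (z ^+ 2 - t1 ^+ 2) * (z ^+ 2 - t2 ^+ 2) * (z ^+ 2 - t3 ^+ 2).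
Proof. by rewrite fL_comp horner_comp hornerXn gL_horner_t. Qed.

Lemma fullv_le_t (E : {subfield L}) : t1 \in E -> t2 \in E -> t3 \in E -> (fullv <= E)%VS.
Proof.
move=> t1E t2E t3E; have [rs fL_split <-] := splitL.
apply/Fadjoin_seqP; split=> [|z]; first exact: sub1v.
rewrite -root_prod_XsubC -(eqp_root fL_split) rootE fL_horner_t !subr_sqr.
rewrite !mulf_eq0 -!orbA !subr_eq0 !addr_eq0.
by case/or4P=> [||| /or3P[||]] /eqP ->; rewrite ?rpredN.
Qed.

Lemma fullv_le_sr (E : {subfield L}) :
  s \in E -> r1 \in E -> r2 \in E -> r3 \in E -> (fullv <= E)%VS.
Proof.
move=> sE r1E r2E r3E.
have quot (r t : L) : r \in E -> r * t = s -> t \in E.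
  move=> rE rt; have r_neq0 : r != 0 by apply: contraNneq s_neq0 => r0; rewrite -rt r0 mul0r.
  by rewrite -(mulKf r_neq0 t) rt rpredM ?rpredV.
by apply: fullv_le_t; [apply: (quot r1) | apply: (quot r2) | apply: (quot r3)];
  rewrite // /r1 /r2 /r3 /s; ring.
Qed.

Lemma hL_factor : hL = \prod_(r <- [:: r1; r2; r3]) ('X - r%:P).
Proof.
rewrite cubic_prod_XsubC /hpoly map_int_cubic m_t n_t c_t /r1 /r2 /r3.
by congr cubic; ring.
Qed.

Lemma root_hL z : root hL z = [|| z == r1, z == r2 | z == r3].
Proof. by rewrite hL_factor root_prod_XsubC !inE. Qed.

Lemma sqr_dlt : dlt ^+ 2 = (dmnc m n c)%:~R.
Proof.
rewrite /dmnc !(rmorphN, rmorphD, rmorphB, rmorphM, rmorphXn) /= m_t n_t c_t.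
by rewrite /dlt /r1 /r2 /r3; ring.
Qed.

Lemma dim_adjoin_s : (\dim <<1; s>> <= 2)%N.
Proof.
by apply: (dim_adjoin_sqr_le2 (q := - c%:~R)); rewrite sqr_s -[_%:A]/(in_alg L _) rmorphN rmorph_int.
Qed.

Lemma hpoly_irr_of_dvd3 : (3 %| \dim {:L})%N -> irreducible_poly (hpoly m n c).
Proof.
move=> dvd3; apply: cubic_irreducible; first by rewrite size_cubic.
move=> x; apply/negP => hx.
have x_dvd : 'X - x%:P %| hpoly m n c by rewrite dvdp_XsubCl.
pose q := hpoly m n c %/ ('X - x%:P).
have size_q : size q = 3%N by rewrite size_divp ?polyXsubC_eq0 // size_cubic size_XsubC.
have dim_root z : root hL z -> (\dim <<1; z>> <= 2)%N.
  rewrite -(divpK x_dvd) rmorphM rootM => /orP[] hz.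
    by have := dim_adjoin_root_lt _ hz; rewrite size_q; apply; rewrite -size_poly_gt0 size_q.
  have := dim_adjoin_root_lt _ hz; rewrite size_XsubC polyXsubC_eq0 => /(_ isT).
  exact: ltnW.
pose E := <<<<<<1; r1>>; r2>>; s>>%AS.
have r1E : r1 \in E by do 2 apply: (subvP (subv_adjoin _ _)); exact: memv_adjoin.
have r2E : r2 \in E by apply: (subvP (subv_adjoin _ _)); exact: memv_adjoin.
have EL : (E :> {vspace L}) = fullv.
  apply/eqP; rewrite eqEsubv subvf; apply: fullv_le_sr => //; first exact: memv_adjoin.
  rewrite (_ : r3 = - mL - r1 - r2); last by rewrite m_t /r1 /r2 /r3; ring.
  by rewrite !rpredB ?rpredN ?rpred_int.
have := adim_gt0 E; move: dvd3; rewrite -EL !dim_Fadjoin dimv1 muln1.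
have le2 k : (k <= 2)%N -> (0 < k)%N -> ~~ (3 %| k)%N by case: k => [|[|[|]]].
rewrite !muln_gt0 !Euclid_dvdM // => /or3P[] dvd /and3P[pos1 pos2 pos3];
  move: dvd; apply/negP; apply: le2 => //; apply: leq_trans (adjoin_degree_le_dim _ _) _.
- exact: dim_adjoin_s.
- by apply: dim_root; rewrite root_hL eqxx orbT.
- by apply: dim_root; rewrite root_hL eqxx.
Qed.

Section IrreducibleResolvent.
Hypothesis h_irr : irreducible_poly (hpoly m n c).

Lemma dim_hL_root z : root hL z -> \dim <<1; z>> = 3%N.
Proof. by move=> hz; rewrite (dim_adjoin_irr_root h_irr hz) size_cubic. Qed.

Lemma minPoly_r1 : minPoly 1 r1 = hL.
Proof.
have r1_root : root hL r1 by rewrite root_hL eqxx.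
apply/eqP; rewrite -eqp_monic ?monic_minPoly ?monic_map ?monic_cubic //.
rewrite -dvdp_size_eqp ?minPoly_dvdp ?alg_polyOver //.
by rewrite size_minPoly -dim_adjoin1 dim_hL_root // size_map_poly size_cubic.
Qed.

Lemma uniq_hL_roots : uniq [:: r1; r2; r3].
Proof.
rewrite -separable_prod_XsubC -hL_factor -minPoly_r1.
exact: (pcharf0_separable _ (pchar_num_ext L)).
Qed.

Lemma r1_in_K1 : r1 \in K1.
Proof. exact: memv_adjoin. Qed.

Lemma r23_in_K1P : r2 \in K1 /\ r3 \in K1 <-> dlt \in 1%VS.
Proof.
have dlt_sqr : dlt ^+ 2 = (dmnc m n c)%:~R%:A.
  by rewrite sqr_dlt -[_%:A]/(in_alg L _) rmorph_int.
split=> [[r2K r3K] | dlt1].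
  have dltK : dlt \in K1 by rewrite !rpredM ?rpredB ?r1_in_K1.
  have : (\dim <<1; dlt>> %| 3)%N.
    by rewrite -(@dim_hL_root r1) ?root_hL ?eqxx // field_dimS // sub_adjoin1v.
  rewrite -adjoin_deg_eq1 -dim_adjoin1 -[X in (X == _)]prednK ?adim_gt0 //.
  by move: (dim_adjoin_sqr_le2 dlt_sqr); case: (\dim _) => [|[|[|]]].
have two_neq0 : (2 : L) != 0 by move: (pchar_num_ext L) => /pcharf0P ->.
have [r12 r13] : r1 != r2 /\ r1 != r3.
  by move: uniq_hL_roots; rewrite /= !inE negb_or => /andP[/andP[]].
have D_neq0 : (r1 - r2) * (r1 - r3) != 0 by rewrite mulf_neq0 ?subr_eq0.
have DK : (r1 - r2) * (r1 - r3) \in K1.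
  rewrite (_ : _ * _ = 3 * r1 ^+ 2 + 2 * mL * r1 + nL); last first.
    by rewrite m_t n_t /r1 /r2 /r3; ring.
  by rewrite !(r1_in_K1, rpred_nat, rpred_int, rpredX, rpredD, rpredM).
have sumK : r2 + r3 \in K1.
  by rewrite (_ : _ + _ = - mL - r1) ?rpredB ?rpredN ?rpred_int ?r1_in_K1 // m_t /r1 /r2 /r3; ring.
have diffK : r2 - r3 \in K1.
  rewrite (_ : _ - _ = dlt / ((r1 - r2) * (r1 - r3))); last by rewrite /dlt mulrC mulKf.
  by rewrite rpred_div // (subvP (sub1v _)).
split.
  rewrite (_ : r2 = (r2 + r3 + (r2 - r3)) / 2); last by field.
  exact: rpred_div (rpredD sumK diffK) (rpred_nat _ _).
rewrite (_ : r3 = (r2 + r3 - (r2 - r3)) / 2); last by field.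
exact: rpred_div (rpredB sumK diffK) (rpred_nat _ _).
Qed.

Lemma normalField_K1P : normalField 1 K1 <-> r2 \in K1 /\ r3 \in K1.
Proof.
split=> [/normalFieldP/(_ r1 r1_in_K1)[rs /allP rsK min_rs] | [r2K r3K]].
  have rootK z : root hL z -> z \in K1 by rewrite -minPoly_r1 min_rs root_prod_XsubC => /rsK.
  by split; apply: rootK; rewrite root_hL eqxx ?orbT.
apply/splitting_normalField; first exact: sub1v.
exists hL; first exact: alg_polyOver.
exists [:: r1; r2; r3]; first by rewrite hL_factor eqpxx.
apply/eqP; rewrite eqEsubv; apply/andP; split.
  apply/Fadjoin_seqP; split=> [|z]; first exact: sub1v.
  by rewrite !inE => /or3P[] /eqP ->; rewrite ?r1_in_K1.
by apply/FadjoinP; split; [exact: subv_adjoin_seq | apply: seqv_sub_adjoin; rewrite inE eqxx].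
Qed.

Lemma normalField_s : normalField 1 <<1; s>>.
Proof.
apply/splitting_normalField; first exact: sub1v.
exists (map_poly (in_alg L) ('X^2 + (c%:~R)%:P)); first exact: alg_polyOver.
exists [:: s; - s].
  rewrite rmorphD /= map_polyXn map_polyC /= -[_%:A]/(in_alg L _) rmorph_int.
  rewrite !big_cons big_nil -[cL]opprK -sqr_s !(polyCN, polyC_exp).
  by rewrite opprK mulr1 -subr_sqr eqpxx.
apply/eqP; rewrite eqEsubv; apply/andP; split.
  apply/Fadjoin_seqP; split=> [|z]; first exact: sub1v.
  by rewrite !inE => /orP[] /eqP ->; rewrite ?rpredN memv_adjoin.
by apply/FadjoinP; split; [exact: subv_adjoin_seq | apply: seqv_sub_adjoin; rewrite inE eqxx].
Qed.

Lemma dim_full_K1 : r2 \in K1 -> r3 \in K1 -> \dim {:L} = (adjoin_degree K1 s * 3)%N.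
Proof.
move=> r2K r3K; pose E := <<K1; s>>%AS.
have memE z : z \in K1 -> z \in E by apply: (subvP (subv_adjoin _ _)).
have EL : (E :> {vspace L}) = fullv.
  apply/eqP; rewrite eqEsubv subvf.
  by apply: fullv_le_sr; [exact: memv_adjoin | exact: memE r1_in_K1 | exact: memE | exact: memE].
by rewrite -EL dim_Fadjoin (@dim_hL_root r1) // root_hL eqxx.
Qed.

Lemma gpoly_irr_of_hpoly : irreducible_poly (gpoly m n c).
Proof.
apply: cubic_irreducible; first by rewrite gpoly_cubic size_cubic.
move=> y; apply/negP => gy.
have no_sqrt (t r : L) : t * r = s -> t ^+ 2 = y%:A -> root hL r -> False.
  move=> tr ty hr; have t_neq0 : t != 0.
    by apply: contraNneq s_neq0 => t0; rewrite -tr t0 mul0r.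
  have : r ^+ 2 = (- c%:~R / y)%:A.
    rewrite -[_%:A]/(in_alg L _) fmorph_div rmorphN rmorph_int /= -ty.
    by rewrite -sqr_s -tr; field.
  by move/dim_adjoin_sqr_le2; rewrite dim_hL_root.
move/rootP: (rmorph_root (in_alg L) gy); rewrite gL_horner_t => /eqP.
rewrite !mulf_eq0 !subr_eq0 -orbA => /or3P[] /eqP ty.
- by apply: (no_sqrt t1 r1); rewrite ?root_hL ?eqxx // /r1 /s mulrA.
- by apply: (no_sqrt t2 r2); rewrite ?root_hL ?eqxx ?orbT // /r2 /s; ring.
- by apply: (no_sqrt t3 r3); rewrite ?root_hL ?eqxx ?orbT // /r3 /s; ring.
Qed.

End IrreducibleResolvent.

Lemma Gal_isog_Zp6 : ~ (exists k : int, - c = k ^+ 2) -> irreducible_poly (gpoly m n c) ->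
  (exists k : int, dmnc m n c = k ^+ 2) -> ('Gal({:L} / 1) \isog Zp 6)%g.
Proof.
move=> not_sqr g_irr disc_sqr; have h_irr := hpoly_irr_of_gpoly c_neq0 c_dvd g_irr.
have [r2K r3K] := (r23_in_K1P h_irr).2 ((sqr_int_mem1 sqr_dlt).2 disc_sqr).
have dim_s : \dim <<1; s>> = 2%N.
  apply/eqP; rewrite eqn_leq dim_adjoin_s ltn_neqAle eq_sym adim_gt0 andbT.
  by rewrite dim_adjoin1 adjoin_deg_eq1; apply/negP => /(sqr_int_mem1 sqr_s_int).1.
have dimL : \dim {:L} = 6%N.
  have := field_dimS (subvf <<1; s>>); have := adim_gt0 {:L}.
  rewrite dim_s (dim_full_K1 h_irr r2K r3K).
  have := leq_trans (adjoin_degree_le_dim K1 s) dim_adjoin_s.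
  by case: (adjoin_degree _ _) => [|[|[|]]].
have [nK1 cardK1] := normalField_Gal_normal ((normalField_K1P h_irr).2 (conj r2K r3K)).
have [nS cardS] := normalField_Gal_normal normalField_s.
apply/isog_ZpP => //; split; last by rewrite card_Gal_full.
rewrite dimL (@dim_hL_root h_irr r1) ?root_hL ?eqxx // in cardK1.
rewrite dimL dim_s in cardS.
apply: (cyclic_coprime_normal_mul nK1 nS); rewrite ?cardK1 ?cardS ?card_Gal_full ?dimL //.
  by apply: prime_cyclic; rewrite cardK1.
by apply: prime_cyclic; rewrite cardS.
Qed.

Lemma Gal_isog_Zp6_conditions : ('Gal({:L} / 1) \isog Zp 6)%g ->
  [/\ ~ (exists k : int, - c = k ^+ 2), irreducible_poly (gpoly m n c)
    & exists k : int, dmnc m n c = k ^+ 2].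
Proof.
case/isog_ZpP => // cycG; rewrite card_Gal_full => dimL.
have h_irr : irreducible_poly (hpoly m n c) by apply: hpoly_irr_of_dvd3; rewrite dimL.
have [r2K r3K] := (normalField_K1P h_irr).1 (abelian_Gal_normalField _ (cyclic_abelian cycG)).
split; first 1 last.
- exact: gpoly_irr_of_hpoly.
- by apply/(sqr_int_mem1 sqr_dlt).1/(r23_in_K1P h_irr).
move/(sqr_int_mem1 sqr_s_int) => s1.
have adj1 : adjoin_degree K1 s = 1%N by apply/eqP; rewrite adjoin_deg_eq1 (subvP (sub1v _)).
by move: dimL; rewrite (dim_full_K1 h_irr r2K r3K) adj1.
Qed.

End Roots.

End SplittingField.

Theorem lemma2p4 (m n c : int) (hc : c != 0) (hdvd : (c %| n ^+ 2)%Z)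
  (L : splittingFieldType rat)
  (hL : splittingFieldFor 1%VS (map_poly (in_alg L) (fpoly m n c)) {:L}) :
  ('Gal({:L} / 1%VS) \isog Zp 6)%g <->
  [/\ ~ (exists k : int, - c = k ^+ 2),
      irreducible_poly (gpoly m n c)
    & exists k : int, dmnc m n c = k ^+ 2].
Proof.
have [t1 [t2 [t3 [m_t n_t c_t]]]] := exists_t hc hdvd hL.
split; first exact: Gal_isog_Zp6_conditions m_t n_t c_t.
by case; exact: Gal_isog_Zp6 m_t n_t c_t.
Qed.
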